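(* In the setting described in the context, suppose $T$ and $A$ are irreducible. Then for each $j\in\{1,\dots,M\}$ there exists a nonzero integer $k_j$ such that $(0,j)\to(k_j,j)$ in the Markov additive process with kernel $\{\Gamma_A(k)\}_{k\in\mathbb Z}$.
   Context: Let $M_0,M$ be positive integers. Consider a discrete-time Markov chain of M/G/1 type with state space $\{(0,j):1\le j\le M_0\}\cup\{(k,j):k\ge1,1\le j\le M\}$ and transition matrix in lexicographic order \[ T=\begin{pmatrix}B(0)&B(1)&B(2)&\cdots\\ C(0)&A(1)&A(2)&\cdots\\ O&A(0)&A(1)&\cdots\\ O&O&A(0)&\cdots\\ \vdots&\vdots&\vdots&\ddots\end{pmatrix}, \] with nonnegative blocks $A(k)$ ($M\times M$), $B(0)$, $B(k)$, $C(0)$ of compatible sizes, $A=\sum_{k\ge0}A(k)$ stochastic, $B(0)e+\sum_{k\ge1}B(k)e=e$. Let $\Gamma_A(k)=A(k+1)$ for $k\ge-1$ and $\Gamma_A(k)=O$ for $k\le-2$. The Markov additive process with kernel $\{\Gamma_A(k)\}$ on $\mathbb Z\times\{1,\dots,M\}$ moves from $(k_0,i)$ to $(k_0+k,j)$ with probability $[\Gamma_A(k)]_{i,j}$; $(k_1,j_1)\to(k_2,j_2)$ means $(k_2,j_2)$ is reached from $(k_1,j_1)$ with positive probability along some path of positive length. *)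

From HB Require Import structures.
From mathcomp Require Import all_boot all_order all_algebra.
From mathcomp Require Import boolp classical_sets reals topology normedtype sequences.
Set Implicit Arguments. Unset Strict Implicit. Unset Printing Implicit Defensive.
Import Order.TTheory GRing.Theory Num.Theory numFieldNormedType.Exports.
Local Open Scope ring_scope.

Inductive reach (R : realType) (S : Type) (P : S -> S -> R) : S -> S -> Prop :=
| reach1 x y : 0 < P x y -> reach P x y
| reachS x y z : 0 < P x y -> reach P y z -> reach P x z.

Definition irreducible_mx (R : realType) (n : nat) (X : 'M[R]_n) : Prop :=
  forall i j : 'I_n, reach (fun a b : 'I_n => X a b) i j.

(* States of the M/G/1-type chain:
   L0 j      = state (0, j), j : 'I_M0  (phases 1..M0 shifted to 0..M0-1)
   Lk k j    = state (k+1, j), j : 'I_M  (level k+1 >= 1). *)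
Inductive mg1_state (M0 M : nat) : Type :=
| L0 of 'I_M0
| Lk of nat & 'I_M.

(* Transition probabilities of T.
   B0 = B(0); B k = B(k) for k >= 1 (the value B 0 is never used);
   C0 = C(0); A k = A(k). *)
Definition mg1_T (R : realType) (M0 M : nat)
  (B0 : 'M[R]_(M0, M0)) (B : nat -> 'M[R]_(M0, M)) (C0 : 'M[R]_(M, M0))
  (A : nat -> 'M[R]_M) (x y : mg1_state M0 M) : R :=
  match x, y with
  | L0 i, L0 j => B0 i j
  | L0 i, Lk l j => B l.+1 i j
  | Lk 0 i, L0 j => C0 i j
  | Lk _ _, L0 _ => 0
  | Lk k i, Lk l j =>
      if (k <= l.+1)%N then A (l.+1 - k)%N i j else 0
  end.

Definition Asum (R : realType) (M : nat) (A : nat -> 'M[R]_M) : 'M[R]_M :=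
  \matrix_(i, j) (limn (series (fun k => (A k i j : R)))).

Definition GammaA (R : realType) (M : nat) (A : nat -> 'M[R]_M) (k : int) : 'M[R]_M :=
  if (-1 <= k)%R then A (absz (k + 1)) else 0.

Definition map_kernel (R : realType) (M : nat) (A : nat -> 'M[R]_M)
  (x y : int * 'I_M) : R :=
  GammaA A (y.1 - x.1) x.2 y.2.

From HB Require Import structures.
From mathcomp Require Import all_boot all_order all_algebra.
From mathcomp Require Import boolp classical_sets reals topology normedtype sequences.
From mathcomp Require Import zify.
Import Order.TTheory GRing.Theory Num.Theory numFieldNormedType.Exports.
Local Open Scope ring_scope.

(* Every edge i -> j of the graph of A = sum_k A(k) comes from some A(k),
   i.e. from a MAP step (0, i) -> (k - 1, j), so irreducibility of A gives
   MAP paths (0, i) -> (d_i, j) for every phase i.  On levels >= 1 the chain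
   T moves exactly like the MAP (level n + 1 of T is MAP level n), so the
   start of a T-path from level N + 1 down to level 0 is a MAP path from
   (N, j) to some (0, i').  Taking N > max |d_i| gives (N, j) -> (d_i', j)
   with d_i' != N, and the MAP is translation invariant. *)

Lemma reach_homo (R : realType) (S S' : Type) (P : S -> S -> R)
    (Q : S' -> S' -> R) (f : S -> S') :
  (forall x y, 0 < P x y -> 0 < Q (f x) (f y)) ->
  forall x y, reach P x y -> reach Q (f x) (f y).
Proof.
move=> PQ x y; elim=> [a b /PQ ab | a b c /PQ ab _ IH]; first exact: reach1.
exact: reachS IH.
Qed.

Lemma series_ge0_lim_gt0 (R : realType) (u : nat -> R) :
  (forall k, 0 <= u k) -> 0 < limn (series u) -> exists k, 0 < u k.
Proof.
move=> u_ge0; apply: contraPP => /forallNP u_le0.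
have u0 k : u k = 0 by apply/eqP; rewrite eq_le u_ge0 andbT leNgt; apply/negP.
have -> : series u = fun=> 0 by apply: funext => n; rewrite /series /= big1.
by rewrite (_ : limn _ = 0) ?ltxx //; exact: lim_cst.
Qed.

Section MarkovAdditiveProcess.
Context {R : realType} {M : nat} {A : nat -> 'M[R]_M}.

Lemma map_kernel_shift (t : int) (x y : int * 'I_M) :
  map_kernel A (x.1 + t, x.2) (y.1 + t, y.2) = map_kernel A x y.
Proof. by rewrite /map_kernel /= (_ : y.1 + t - (x.1 + t) = y.1 - x.1) //; lia. Qed.

Lemma reach_map_shift (t : int) {x y : int * 'I_M} :
  reach (map_kernel A) x y ->
  reach (map_kernel A) (x.1 + t, x.2) (y.1 + t, y.2).
Proof.
apply: (@reach_homo _ _ _ _ _ (fun z => (z.1 + t, z.2))) => a b.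
by rewrite map_kernel_shift.
Qed.

Lemma map_kernel_A (k : nat) (l : int) i j :
  map_kernel A (l, i) (l + k%:Z - 1, j) = A k i j.
Proof.
rewrite /map_kernel /GammaA /=.
have -> : (-1 <= l + k%:Z - 1 - l)%R = true by apply/idP; lia.
by have -> : absz (l + k%:Z - 1 - l + 1) = k by lia.
Qed.

Hypothesis A_ge0 : forall k i j, 0 <= A k i j.

Lemma reach_Asum_lift i j :
  reach (fun a b : 'I_M => Asum A a b) i j ->
  exists d : int, reach (map_kernel A) (0, i) (d, j).
Proof.
have step a b : 0 < Asum A a b ->
    exists k : nat, 0 < map_kernel A (0, a) (k%:Z - 1, b).
  rewrite mxE => /series_ge0_lim_gt0-/(_ (fun k => A_ge0 k a b))[k Ak].
  by exists k; rewrite -[k%:Z - 1]add0r addrA map_kernel_A.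
elim=> [a b /step[k ab] | a b c /step[k ab] _ [d bc]].
  by exists (k%:Z - 1); apply: reach1.
exists (d + (k%:Z - 1)); apply: reachS ab _.
by have := reach_map_shift (k%:Z - 1) bc; rewrite /= add0r.
Qed.

End MarkovAdditiveProcess.

Section MG1.
Variables (R : realType) (M0 M : nat).
Variables (B0 : 'M[R]_(M0, M0)) (B : nat -> 'M[R]_(M0, M)) (C0 : 'M[R]_(M, M0)).
Variable A : nat -> 'M[R]_M.

Lemma mg1_T_Lk_gt0 k i l j :
  0 < mg1_T B0 B C0 A (Lk M0 k i) (Lk M0 l j) ->
  0 < map_kernel A (k%:Z, i) (l%:Z, j).
Proof.
rewrite /mg1_T.
have -> : match k with 0%N | _ => if (k <= l.+1)%N then A (l.+1 - k)%N i j else 0 end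
  = if (k <= l.+1)%N then A (l.+1 - k)%N i j else 0 by case: k.
case: ifP => [kl | _]; last by rewrite ltxx.
by rewrite (_ : l%:Z = k%:Z + (l.+1 - k)%N%:Z - 1) ?map_kernel_A //; lia.
Qed.

(* The conclusion is stated in continuation form because the MAP path from
   (n, i) to (0, i') is empty when the T-path leaves level 1 at once. *)
Lemma reach_mg1_T_level0 x y :
  reach (mg1_T B0 B C0 A) x y -> forall n i y0, x = Lk M0 n i -> y = L0 M y0 ->
  exists i', forall z, reach (map_kernel A) (0, i') z -> reach (map_kernel A) (n%:Z, i) z.
Proof.
elim=> [a b ab | a b c ab _ IH] n i y0 Ea Eb; subst a.
  by subst b; exists i => z; case: n ab => [|n] //; rewrite ltxx.
case: b ab IH => [b0 | m i2] ab IH.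
  by exists i => z; case: n ab => [|n] //; rewrite ltxx.
have [i' Hi'] := IH m i2 y0 erefl Eb.
by exists i' => z /Hi'; apply: reachS; apply: mg1_T_Lk_gt0.
Qed.

End MG1.

Theorem proposition2p8 (R : realType) (M0 M : nat)
  (B0 : 'M[R]_(M0, M0)) (B : nat -> 'M[R]_(M0, M)) (C0 : 'M[R]_(M, M0))
  (A : nat -> 'M[R]_M) :
  (0 < M0)%N -> (0 < M)%N ->
  (forall k i j, 0 <= A k i j) ->
  (forall i j, 0 <= B0 i j) ->
  (forall k, (1 <= k)%N -> forall i j, 0 <= B k i j) ->
  (forall i j, 0 <= C0 i j) ->
  (* A = sum_k A(k) is stochastic *)
  (forall i j, cvgn (series (fun k => A k i j))) ->
  (forall i, \sum_j Asum A i j = 1) ->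
  (* B(0) e + sum_{k>=1} B(k) e = e *)
  (forall i, (\sum_j B0 i j) + limn (series (fun k => \sum_j B k.+1 i j)) = 1) ->
  (forall i, cvgn (series (fun k => \sum_j B k.+1 i j))) ->
  (* T and A irreducible *)
  (forall x y : mg1_state M0 M, reach (mg1_T B0 B C0 A) x y) ->
  irreducible_mx (Asum A) ->
  forall j : 'I_M, exists k : int, k != 0 /\ reach (map_kernel A) (0%R, j) (k, j).
Proof.
move=> M0_gt0 _ A_ge0 _ _ _ _ _ _ _ T_irr A_irr j.
have /fin_all_exists[d d_reach] i : exists d : int, reach (map_kernel A) (0, i) (d, j).
  exact: reach_Asum_lift A_ge0 _ _ (A_irr i j).
pose N := (\max_i absz (d i)).+1.
have /reach_mg1_T_level0/(_ N j _ erefl erefl)[i' down] :=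
  T_irr (Lk M0 N j) (L0 M (Ordinal M0_gt0)).
exists (d i' - N%:Z); split.
  by apply/eqP => E; have := @leq_bigmax _ (fun i => absz (d i)) i'; rewrite -/N; lia.
by have := reach_map_shift (- N%:Z) (down _ (d_reach i')); rewrite addrN.
Qed.
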